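(* Fix $\beta>1$. Let $(D_n)_{n\geq1}$ be a sequence of non-empty finite sets of generalised $\beta$-digits, and suppose that both the lengths and the subdigits of all generalised digits appearing in the sets $D_n$ are bounded. Identifying each generalised digit with its value, let $\ell_n$ and $u_n$ be the least and greatest elements of $D_n$, $\Delta_n=u_n-\ell_n$, and let $\delta_n$ be the largest gap between consecutive elements of $D_n$ (with $\delta_n=0$ if $|D_n|=1$). If for every $n\geq1$ $$\delta_n\leq\sum_{i=1}^{\infty}\Delta_{n+i}\,\beta^{-i},$$ then $$\Big\{\sum_{n=1}^\infty a_n\beta^{-n} : a_n\in D_n \text{ for all } n\Big\}=\Big[\sum_{n=1}^\infty \ell_n\beta^{-n},\ \sum_{n=1}^\infty u_n\beta^{-n}\Big].$$
   Context: A generalised $\beta$-digit of length $k+1$ is a string $c_0.c_1\ldots c_k$ of non-negative integers $c_0,\dots,c_k$ (its subdigits); its value is $\sum_{i=0}^k c_i\beta^{-i}$, which depends on $\beta$. Least/greatest elements and gaps are taken with respect to these values. *)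

From HB Require Import structures.
From mathcomp Require Import all_boot all_order all_algebra.
From mathcomp Require Import all_classical all_reals all_analysis.
Set Implicit Arguments. Unset Strict Implicit. Unset Printing Implicit Defensive.
Import Order.TTheory GRing.Theory Num.Theory.
Local Open Scope ring_scope.

(* A generalised beta-digit c_0.c_1...c_k is the sequence [:: c_0; ...; c_k]
   of its subdigits (non-empty); its value is sum_i c_i beta^-i. *)
Definition gdigit_val (R : realType) (beta : R) (d : seq nat) : R :=
  \sum_(i < size d) (nth 0%N d i)%:R * beta ^- i.

Definition seq_min (R : realType) (s : seq R) : R :=
  \big[Num.min/head 0 s]_(x <- s) x.
Definition seq_max (R : realType) (s : seq R) : R :=
  \big[Num.max/head 0 s]_(x <- s) x.

Definition seq_gap (R : realType) (s : seq R) : R :=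
  \big[Num.max/0]_(x <- s)
    \big[Num.max/0]_(y <- s | (x < y) && ~~ has (fun z => (x < z) && (z < y)) s)
      (y - x).

From HB Require Import structures.
From mathcomp Require Import all_boot all_order all_algebra.
From mathcomp Require Import all_classical all_reals all_analysis.
From mathcomp Require Import ring lra.
Import numFieldNormedType.Exports.
Set Implicit Arguments. Unset Strict Implicit. Unset Printing Implicit Defensive.
Import Order.TTheory GRing.Theory Num.Theory.
Local Open Scope ring_scope.
Local Open Scope classical_set_scope.

(* Build x from the left greedily, keeping the invariant that the remainder
   x - q_m after m digits lies between the smallest and the largest possible
   tails, sum_{k>m} l_k beta^-k and sum_{k>m} u_k beta^-k.  Rescaled by
   beta^(m+1), extending the invariant asks for a digit d in D_{m+1} with
   d <= y <= d + w, where w is the rescaled difference of the next tails; such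
   a d exists for every y in [l_{m+1}, u_{m+1} + w] because consecutive
   elements of D_{m+1} are at most w apart, which is the gap hypothesis.  Both
   tails tend to 0, so the partial sums converge to x.  The other inclusion
   is monotonicity of the series. *)

Section ListExtrema.
Variable R : realType.
Implicit Types (s : seq R) (x y w : R).

Lemma seq_min_le s x : x \in s -> seq_min s <= x.
Proof. by move=> xs; apply: ge_bigmin_seq. Qed.

Lemma seq_max_ge s x : x \in s -> x <= seq_max s.
Proof. by move=> xs; apply: le_bigmax_seq. Qed.

Lemma seq_min_in s : s != [::] -> seq_min s \in s.
Proof.
case: s => // h t _; rewrite /seq_min /= big_seq.
apply: (big_ind (fun y => y \in h :: t)) => //; first exact: mem_head.
by move=> x y xs ys; rewrite minEle; case: ifP.
Qed.

Lemma seq_max_in s : s != [::] -> seq_max s \in s.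
Proof.
case: s => // h t _; rewrite /seq_max /= big_seq.
apply: (big_ind (fun y => y \in h :: t)) => //; first exact: mem_head.
by move=> x y xs ys; rewrite maxEle; case: ifP.
Qed.

Lemma seq_gap_ge s x y : x \in s -> y \in s -> x < y ->
  ~~ has (fun z => (x < z) && (z < y)) s -> y - x <= seq_gap s.
Proof.
move=> xs ys xy xy_consecutive; apply: le_trans (le_bigmax_seq 0 x predT _ xs isT).
by apply: (le_bigmax_seq 0 y _ (fun y => y - x)) => //; rewrite xy.
Qed.

Lemma seq_gap_cover s y w : s != [::] -> seq_min s <= y -> y <= seq_max s + w ->
  seq_gap s <= w -> exists2 x, x \in s & x <= y <= x + w.
Proof.
move=> s_neq0 min_le_y y_le_max gap_le_w.
(* x is the largest element below y; were y > x + w, the next element x'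
   would satisfy x' > y > x + w, a gap larger than w. *)
set below := [seq z <- s | z <= y].
have below_neq0 : below != [::].
  by rewrite -has_filter; apply/hasP; exists (seq_min s); rewrite ?seq_min_in.
have := seq_max_in below_neq0; rewrite mem_filter => /andP[xy xs].
set x := seq_max below in xy xs *.
exists x => //; rewrite xy leNgt; apply/negP => ywx.
set above := [seq z <- s | x < z].
have above_neq0 : above != [::].
  rewrite -has_filter; apply/hasP; exists (seq_max s); first exact: seq_max_in.
  by rewrite -(ltrD2r w) (lt_le_trans ywx).
have := seq_min_in above_neq0; rewrite mem_filter => /andP[xx' x's].
set x' := seq_min above in xx' x's *.
have y_lt_x' : y < x'.
  rewrite ltNge; apply/negP => x'y.
  by move: xx'; rewrite ltNge seq_max_ge // mem_filter x'y.
have : x' - x <= seq_gap s.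
  apply: seq_gap_ge => //; apply/hasPn => z zs; apply/negP => /andP[xz zx'].
  by move: zx'; rewrite ltNge seq_min_le // mem_filter xz.
lra.
Qed.

End ListExtrema.

Section BetaSeries.
Variables (R : realType) (beta : R).
Hypothesis beta_gt1 : 1 < beta.

Let beta_gt0 : 0 < beta. Proof. exact: lt_trans ltr01 beta_gt1. Qed.
Let beta_neq0 : beta != 0. Proof. by rewrite gt_eqF. Qed.
Let invXbeta_gt0 k : 0 < beta ^- k. Proof. by rewrite invr_gt0 exprn_gt0. Qed.

Definition beta_psum (c : nat -> R) N := \sum_(1 <= k < N) c k * beta ^- k.

Definition beta_tail (c : nat -> R) m := limn (beta_psum c) - beta_psum c m.+1.

Lemma beta_psumS c N : (1 <= N)%N ->
  beta_psum c N.+1 = beta_psum c N + c N * beta ^- N.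
Proof. by move=> N_ge1; rewrite /beta_psum big_nat_recr. Qed.

Lemma beta_psumB c c' N :
  beta_psum (fun k => c' k - c k) N = beta_psum c' N - beta_psum c N.
Proof. by rewrite /beta_psum -sumrB; apply: eq_bigr => k _; rewrite mulrBl. Qed.

Lemma geometric_beta_sum N :
  (beta - 1) * \sum_(1 <= k < N.+1) beta ^- k = 1 - beta ^- N.
Proof.
elim: N => [|N IH]; first by rewrite big_geq // expr0 invr1 mulr0 subrr.
rewrite big_nat_recr //= mulrDr IH exprSr invfM.
by field; rewrite expf_neq0 // andbT.
Qed.

Section BoundedDigits.
Variables (c : nat -> R) (B : R).
Hypothesis c_bounded : forall k, (1 <= k)%N -> 0 <= c k <= B.

Lemma beta_psum_le N : beta_psum c N <= B / (beta - 1).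
Proof.
have beta1_gt0 : 0 < beta - 1 by rewrite subr_gt0.
have B_ge0 : 0 <= B by case/andP: (c_bounded (isT : 1 <= 1)%N); apply: le_trans.
case: N => [|N]; first by rewrite /beta_psum big_geq // divr_ge0 // ltW.
apply: (@le_trans _ _ (B * \sum_(1 <= k < N.+1) beta ^- k)).
  rewrite /beta_psum mulr_sumr; apply: ler_sum_nat => k /andP[k_ge1 _].
  by rewrite ler_pM2r ?invXbeta_gt0 //; case/andP: (c_bounded k_ge1).
rewrite ler_pdivlMr // -mulrA [X in _ * X]mulrC geometric_beta_sum.
by rewrite ler_piMr // gerBl ltW.
Qed.

Lemma beta_psum_cvg : cvgn (beta_psum c).
Proof.
apply: nondecreasing_is_cvgn.
  apply/nondecreasing_seqP => -[|N]; first by rewrite /beta_psum !big_geq.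
  rewrite (beta_psumS _ (isT : 0 < N.+1)%N) lerDl mulr_ge0 ?(ltW (invXbeta_gt0 _)) //.
  by case/andP: (c_bounded (isT : 0 < N.+1)%N).
by exists (B / (beta - 1)) => _ [N _ <-]; exact: beta_psum_le.
Qed.

End BoundedDigits.

Lemma ler_beta_series c c' : cvgn (beta_psum c) -> cvgn (beta_psum c') ->
  (forall k, (1 <= k)%N -> c k <= c' k) -> limn (beta_psum c) <= limn (beta_psum c').
Proof.
move=> c_cvg c'_cvg le_cc'; apply: ler_lim => //; apply: nearW => N.
apply: ler_sum_nat => k /andP[k_ge1 _].
by rewrite ler_pM2r // le_cc'.
Qed.

Lemma beta_tailS c m :
  beta_tail c m = c m.+1 * beta ^- m.+1 + beta_tail c m.+1.
Proof. by rewrite /beta_tail (beta_psumS _ (isT : 0 < m.+1)%N); ring. Qed.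

Lemma beta_tailB c c' : cvgn (beta_psum c) -> cvgn (beta_psum c') -> forall m,
  beta_tail (fun k => c' k - c k) m = beta_tail c' m - beta_tail c m.
Proof.
move=> c_cvg c'_cvg m; rewrite /beta_tail beta_psumB.
have -> : beta_psum (fun k => c' k - c k) = beta_psum c' - beta_psum c.
  by apply: funext => N; rewrite beta_psumB.
by rewrite limB //; ring.
Qed.

Lemma beta_tail_cvg0 c : cvgn (beta_psum c) -> beta_tail c m @[m --> \oo] --> 0.
Proof.
move=> c_cvg; rewrite -(subrr (limn (beta_psum c))).
by apply: cvgB; [exact: cvg_cst | rewrite cvg_shiftS].
Qed.

Lemma beta_psum_shift c m N :
  \sum_(1 <= i < N.+1) c (m + i)%N * beta ^- i =
  beta ^+ m * (beta_psum c (N + m.+1) - beta_psum c m.+1).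
Proof.
rewrite /beta_psum [X in _ = _ * (X - _)](big_cat_nat _ (n := m.+1)) ?leq_addl //=.
rewrite [X in _ * X]addrC addKr -(add1n m) big_addn.
have -> : (N + (1 + m) - m = N.+1)%N by rewrite add1n addnS subSn ?leq_addl // addnK.
rewrite mulr_sumr; apply: eq_bigr => i _.
by rewrite addnC exprD invfM; field; rewrite !expf_neq0.
Qed.

Lemma beta_series_shift c m : cvgn (beta_psum c) ->
  limn (fun N => \sum_(1 <= i < N) c (m + i)%N * beta ^- i) = beta ^+ m * beta_tail c m.
Proof.
move=> c_cvg; apply: cvg_lim => //; rewrite -cvg_shiftS /=.
under eq_fun => N do rewrite beta_psum_shift.
apply: cvgM; first exact: cvg_cst.
by apply: cvgB; [rewrite (cvg_shiftn m.+1 (beta_psum c)) | exact: cvg_cst].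
Qed.

Lemma beta_psum_choice (A : nat -> R -> Prop) (inv : nat -> R -> Prop) :
  inv 0%N 0 ->
  (forall m q, inv m q -> exists2 d, A m.+1 d & inv m.+1 (q + d * beta ^- m.+1)) ->
  exists2 a : nat -> R, (forall n, (1 <= n)%N -> A n (a n)) &
    forall n, inv n (beta_psum a n.+1).
Proof.
move=> inv0 inv_step.
have /choice[next nextP] : forall mq : nat * R, exists d, inv mq.1 mq.2 ->
    A mq.1.+1 d /\ inv mq.1.+1 (mq.2 + d * beta ^- mq.1.+1).
  move=> [m q] /=; have [/inv_step[d Ad invd]|not_inv] := pselect (inv m q).
    by exists d.
  by exists 0 => /not_inv.
pose fix q n := if n is k.+1 then q k + next (k, q k) * beta ^- k.+1 else 0.
have inv_q n : inv n (q n) by elim: n => //= n IH; exact: (nextP (n, q n) IH).2.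
exists (fun n => next (n.-1, q n.-1)).
  by case=> // n _; exact: (nextP (n, q n) (inv_q n)).1.
suff psum_q n : beta_psum (fun n => next (n.-1, q n.-1)) n.+1 = q n.
  by move=> n; rewrite psum_q.
elim: n => [|n IH]; first by rewrite /beta_psum big_geq.
by rewrite beta_psumS // IH.
Qed.

End BetaSeries.

Section DigitSums.
Variables (R : realType) (beta : R) (S : nat -> seq R) (B : R).
Hypothesis beta_gt1 : 1 < beta.
Hypothesis S_neq0 : forall n, (1 <= n)%N -> S n != [::].
Hypothesis S_bounded : forall n, (1 <= n)%N -> forall x, x \in S n -> 0 <= x <= B.
Hypothesis S_gap : forall n, (1 <= n)%N ->
  seq_gap (S n) <= \big[+%R/0]_(1 <= i <oo)
    ((seq_max (S (n + i)%N) - seq_min (S (n + i)%N)) * beta ^- i).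

Let lo n := seq_min (S n).
Let hi n := seq_max (S n).

Let lo_bounded n : (1 <= n)%N -> 0 <= lo n <= B.
Proof. by move=> n_ge1; apply/S_bounded/seq_min_in/S_neq0. Qed.

Let hi_bounded n : (1 <= n)%N -> 0 <= hi n <= B.
Proof. by move=> n_ge1; apply/S_bounded/seq_max_in/S_neq0. Qed.

Let lo_cvg : cvgn (beta_psum beta lo). Proof. exact: beta_psum_cvg lo_bounded. Qed.
Let hi_cvg : cvgn (beta_psum beta hi). Proof. exact: beta_psum_cvg hi_bounded. Qed.

Lemma digit_sum_in_itv (a : nat -> R) : (forall n, (1 <= n)%N -> a n \in S n) ->
  limn (beta_psum beta lo) <= limn (beta_psum beta a) <= limn (beta_psum beta hi).
Proof.
move=> aS; have a_cvg : cvgn (beta_psum beta a).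
  apply: (beta_psum_cvg beta_gt1 (B := B)) => n n_ge1.
  exact: S_bounded (aS n n_ge1).
apply/andP; split; apply: ler_beta_series => // n n_ge1.
  exact/seq_min_le/aS.
exact/seq_max_ge/aS.
Qed.

Lemma seq_gap_le_tail m :
  seq_gap (S m.+1) * beta ^- m.+1 <= beta_tail beta hi m.+1 - beta_tail beta lo m.+1.
Proof.
have width_cvg : cvgn (beta_psum beta (fun k => hi k - lo k)).
  by rewrite (funext (beta_psumB beta lo hi)); apply: is_cvgB.
have := S_gap (isT : 0 < m.+1)%N.
rewrite (beta_series_shift beta_gt1 _ width_cvg) beta_tailB //.
by rewrite ler_pdivrMr ?exprn_gt0 ?(lt_trans ltr01) // mulrC.
Qed.

Lemma greedy_digit_step x q m :
  q + beta_tail beta lo m <= x <= q + beta_tail beta hi m ->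
  exists2 d, d \in S m.+1 & q + d * beta ^- m.+1 + beta_tail beta lo m.+1 <= x <=
                            q + d * beta ^- m.+1 + beta_tail beta hi m.+1.
Proof.
rewrite (beta_tailS beta lo) (beta_tailS beta hi).
set e := beta ^- m.+1; set TL := beta_tail beta lo m.+1; set TU := beta_tail beta hi m.+1.
move=> /andP[lo_le_x x_le_hi].
have e_gt0 : 0 < e by rewrite invr_gt0 exprn_gt0 // (lt_trans ltr01).
have gap_le := seq_gap_le_tail m; rewrite -/e -/TL -/TU in gap_le.
pose y := (x - q - TL) / e; pose w := (TU - TL) / e.
have ye : y * e = x - q - TL by rewrite divfK ?gt_eqF.
have we : w * e = TU - TL by rewrite divfK ?gt_eqF.
have scale (u v : R) : (u <= v) = (u * e <= v * e) by rewrite ler_pM2r.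
have [|||d dS /andP[d_le_y y_le_dw]] :=
  seq_gap_cover (S_neq0 (isT : 0 < m.+1)%N) (y := y) (w := w).
- by rewrite scale ye -/(lo m.+1); lra.
- by rewrite scale mulrDl ye we -/(hi m.+1); lra.
- by rewrite scale we.
exists d => //; move: d_le_y y_le_dw; rewrite (scale d) (scale y) ye mulrDl we.
by move=> *; apply/andP; split; lra.
Qed.

Lemma itv_sub_digit_sums x :
  limn (beta_psum beta lo) <= x <= limn (beta_psum beta hi) ->
  exists2 a : nat -> R, (forall n, (1 <= n)%N -> a n \in S n) &
    x = limn (beta_psum beta a).
Proof.
move=> /andP[lo_le_x x_le_hi].
have [|a aS a_inv] := beta_psum_choice (A := fun n d => d \in S n)
  (inv := fun m q => q + beta_tail beta lo m <= x <= q + beta_tail beta hi m) _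
  (fun m q => @greedy_digit_step x q m).
  by rewrite /beta_tail /beta_psum !big_geq // !subr0 !add0r lo_le_x x_le_hi.
exists a => //; apply/esym/cvg_lim => //; rewrite -cvg_shiftS /=.
have x_sub_cvg c : cvgn (beta_psum beta c) -> x - beta_tail beta c n @[n --> \oo] --> x.
  move=> c_cvg; rewrite -[X in _ --> X]subr0.
  by apply: cvgB; [exact: cvg_cst | exact: beta_tail_cvg0].
apply: (squeeze_cvgr _ (x_sub_cvg _ hi_cvg) (x_sub_cvg _ lo_cvg)).
by apply: nearW => n; have /andP[? ?] := a_inv n; apply/andP; split; lra.
Qed.

Theorem digit_sums_eq_itv :
  [set x | exists a : nat -> R, (forall n, (1 <= n)%N -> a n \in S n) /\
             x = \big[+%R/0]_(1 <= n <oo) (a n * beta ^- n)]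
  = `[ \big[+%R/0]_(1 <= n <oo) (seq_min (S n) * beta ^- n),
       \big[+%R/0]_(1 <= n <oo) (seq_max (S n) * beta ^- n) ].
Proof.
apply/seteqP; split => x /=.
  by move=> [a [aS ->]]; rewrite in_itv /=; apply: digit_sum_in_itv.
by rewrite in_itv /= => /itv_sub_digit_sums[a aS ->]; exists a.
Qed.

End DigitSums.

Lemma gdigit_val_bound (R : realType) (beta : R) (d : seq nat) (L M : nat) :
  1 <= beta -> (size d <= L)%N -> all (fun c => c <= M)%N d ->
  0 <= gdigit_val beta d <= (L * M)%:R.
Proof.
move=> beta_ge1 size_d d_le_M; have beta_gt0 : 0 < beta := lt_le_trans ltr01 beta_ge1.
apply/andP; split.
  by apply: sumr_ge0 => i _; rewrite mulr_ge0 // invr_ge0 exprn_ge0 // ltW.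
apply: (@le_trans _ _ (\sum_(i < size d) (M%:R : R))).
  apply: ler_sum => i _; rewrite -[X in _ <= X]mulr1 ler_pM //.
  - by rewrite invr_ge0 exprn_ge0 // ltW.
  - by rewrite ler_nat; apply: (allP d_le_M); apply: mem_nth.
  - by rewrite invf_le1 ?exprn_gt0 // exprn_ege1.
rewrite sumr_const card_ord -[_ *+ size d]mulr_natr -natrM ler_nat mulnC.
by rewrite leq_mul2r size_d orbT.
Qed.

Theorem lemma2p2 (R : realType) (beta : R) (D : nat -> seq (seq nat))
  (Hbeta : 1 < beta)
  (Hdig : forall n, (1 <= n)%N -> forall d, d \in D n -> size d != 0%N)
  (Hne : forall n, (1 <= n)%N -> D n != [::])
  (Hbd : exists L M : nat, forall n, (1 <= n)%N -> forall d, d \in D n ->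
           (size d <= L)%N /\ all (fun c => c <= M)%N d)
  (Hgap : forall n, (1 <= n)%N ->
     seq_gap (map (gdigit_val beta) (D n)) <=
     \big[+%R/0]_(1 <= i <oo)
        ((seq_max (map (gdigit_val beta) (D (n + i)%N)) -
          seq_min (map (gdigit_val beta) (D (n + i)%N))) * beta ^- i)) :
  [set x | exists a : nat -> seq nat,
             (forall n, (1 <= n)%N -> a n \in D n) /\
             x = \big[+%R/0]_(1 <= n <oo) (gdigit_val beta (a n) * beta ^- n)]
  = `[ \big[+%R/0]_(1 <= n <oo) (seq_min (map (gdigit_val beta) (D n)) * beta ^- n),
       \big[+%R/0]_(1 <= n <oo) (seq_max (map (gdigit_val beta) (D n)) * beta ^- n) ].
Proof.
have [L [M digits_bounded]] := Hbd.
pose S n := map (gdigit_val beta) (D n).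
have S_neq0 n : (1 <= n)%N -> S n != [::].
  by move=> n_ge1; rewrite -size_eq0 size_map size_eq0 Hne.
have S_bounded n : (1 <= n)%N -> forall x, x \in S n -> 0 <= x <= (L * M)%:R.
  move=> n_ge1 _ /mapP[d dD ->]; have [size_d d_le_M] := digits_bounded n n_ge1 d dD.
  exact: gdigit_val_bound (ltW Hbeta) size_d d_le_M.
rewrite -(digit_sums_eq_itv Hbeta S_neq0 S_bounded Hgap).
apply/seteqP; split => _ [a [aD ->]].
  by exists (fun n => gdigit_val beta (a n)); split => // n /aD /(map_f _).
have /choice[d dP] : forall n, exists d,
    (1 <= n)%N -> d \in D n /\ gdigit_val beta d = a n.
  case=> [|n]; first by exists [::].
  by have /mapP[d dD ->] := aD n.+1 isT; exists d.
exists d; split; first by move=> n /dP[].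
congr (lim (_ @ \oo)); apply: funext => N.
by apply: eq_big_nat => n /andP[/dP[_ ->]].
Qed.
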